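(* Let $\mathcal{A}=\{x_0,x_1,\dots,x_n\}$ be a complex subspace arrangement in $\mathbb{C}^l$ with a linear order satisfying the ordering convention below, and let $\phi\colon D(\mathcal{A})\to D(\widetilde{\mathcal{A}''})$ be the linear map defined below. Then $\phi\circ d=d\circ\phi$.
   Context: A complex subspace arrangement in $\mathbb{C}^l$ is a finite set of complex linear subspaces of $\mathbb{C}^l$ with no two distinct members $x\subset y$. For a finite set $\mathcal{C}$ of linear subspaces of a complex vector space $W$ with a linear order, $D(\mathcal{C})$ is the cochain complex over $\mathbb{Q}$ with basis all subsets $\sigma\subseteq\mathcal{C}$, where with $\vee\sigma=\bigcap_{x\in\sigma}x$ ($\vee\emptyset=W$), $\deg\sigma=2\operatorname{codim}_W(\vee\sigma)-|\sigma|$ and for $\sigma=\{x_{i_1},\dots,x_{i_r}\}$ in increasing order, $d\sigma=\sum_{j:\vee(\sigma\setminus\{x_{i_j}\})=\vee\sigma}(-1)^j(\sigma\setminus\{x_{i_j}\})$. Setting: $\mathcal{A}'=\mathcal{A}\setminus\{x_0\}$; on $\mathcal{A}'$ define $y\sim z$ iff $x_0\cap y=x_0\cap z$, with equivalence classes $\mathcal{A}_1,\dots,\mathcal{A}_r$. The linear order on $\mathcal{A}$ is $x_0<x_1<\dots<x_n$ and is chosen so that if $i<j$, $y\in\mathcal{A}_i$, $z\in\mathcal{A}_j$, then $y<z$. Let $\widetilde{\mathcal{A}''}=\{x_0\cap y\mid y\in\mathcal{A}'\}$, a finite set of subspaces of $W=x_0$ whose elements correspond bijectively to the classes $\mathcal{A}_i$;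 order it by the order of the classes, and form $D(\widetilde{\mathcal{A}''})$ with ambient space $x_0$. Let $E=\{(y,z)\in\mathcal{A}'\times\mathcal{A}'\mid y\sim z,\ y\neq z\}$. Define $\phi$ on basis elements: $\phi(\sigma)=0$ if $x_0\notin\sigma$, or if $x_0\in\sigma$ and $\{y,z\}\subseteq\sigma$ for some $(y,z)\in E$; otherwise $\sigma=\{x_0,x_{i_1},\dots,x_{i_r}\}$ and $\phi(\sigma)=(-1)^r\{x_0\cap x_{i_1},\dots,x_0\cap x_{i_r}\}$ (in particular $\phi(\{x_0\})=\emptyset$). *)

From HB Require Import structures.
From mathcomp Require Import all_boot all_order all_algebra.
From mathcomp Require Import reals complex.
Unset Strict Implicit. Unset Printing Implicit Defensive.
Import Order.TTheory GRing.Theory Num.Theory.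
Local Open Scope ring_scope.

Section CochainComplex.
Variables (F : fieldType) (V : vectType F).

(* A finite linearly ordered family C of subspaces is a sequence; its
   members are indexed by 'I_(size C), the order being that of the indices. *)
Definition member (C : seq {vspace V}) (i : nat) : {vspace V} := nth 0%VS C i.

(* \vee sigma = intersection of the members of sigma, inside the ambient
   space W (so \vee emptyset = W). *)
Definition vjoin (W : {vspace V}) (C : seq {vspace V})
    (sigma : {set 'I_(size C)}) : {vspace V} :=
  (W :&: \bigcap_(i in sigma) member C i)%VS.

Definition cdeg (W : {vspace V}) (C : seq {vspace V})
    (sigma : {set 'I_(size C)}) : int :=
  (2 * (\dim W - \dim (vjoin W C sigma)))%:Z - #|sigma|%:Z.

(* Elements of D(C): Q-linear combinations of the basis {subsets sigma}. *)
Definition cochain (m : nat) := {ffun {set 'I_m} -> rat}.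

Definition basis_el {m : nat} (sigma : {set 'I_m}) : cochain m :=
  [ffun tau => (tau == sigma)%:R].

Definition csum {m : nat} (f g : cochain m) : cochain m := [ffun t => f t + g t].
Definition czero {m : nat} : cochain m := [ffun _ => 0].
Definition cscale {m : nat} (q : rat) (f : cochain m) : cochain m :=
  [ffun t => q * f t].

Definition linext {m m' : nat} (g : {set 'I_m} -> cochain m') (f : cochain m)
  : cochain m' := [ffun tau => \sum_(sigma : {set 'I_m}) f sigma * g sigma tau].

(* position (1-based) of i in sigma listed in increasing order *)
Definition pos {m : nat} (sigma : {set 'I_m}) (i : 'I_m) : nat :=
  #|[set k in sigma | (k <= i)%N]|.

Definition dbasis (W : {vspace V}) (C : seq {vspace V})
    (sigma : {set 'I_(size C)}) : cochain (size C) :=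
  \big[csum/czero]_(i in sigma | vjoin W C (sigma :\ i) == vjoin W C sigma)
     cscale ((-1) ^+ pos sigma i) (basis_el (sigma :\ i)).

Definition dmap (W : {vspace V}) (C : seq {vspace V}) :
  cochain (size C) -> cochain (size C) := linext (dbasis W C).

Definition arrangement (A : seq {vspace V}) : Prop :=
  forall i j : 'I_(size A), i != j -> ~~ (member A i <= member A j)%VS.

(* The map phi.  A = x0 :: A', index 0 is x0, index (lift ord0 j) is the
   j-th element of A'.  B is ~A'' ordered by classes, c j the class of A'_j. *)
Definition phibasis (x0 : {vspace V}) (A' B : seq {vspace V})
    (c : 'I_(size A') -> 'I_(size B))
    (sigma : {set 'I_(size A').+1}) : cochain (size B) :=
  if ord0 \notin sigma then czero
  else if [exists j1 : 'I_(size A'), exists j2 : 'I_(size A'),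
             [&& j1 != j2, lift ord0 j1 \in sigma, lift ord0 j2 \in sigma &
                 (x0 :&: member A' j1 == x0 :&: member A' j2)%VS]]
  then czero
  else cscale ((-1) ^+ (#|sigma| - 1))
        (         basis_el [set k : 'I_(size B) |
                   [exists j : 'I_(size A'), (lift ord0 j \in sigma) && (c j == k)]]).

Definition phimap (x0 : {vspace V}) (A' B : seq {vspace V})
    (c : 'I_(size A') -> 'I_(size B)) :
  cochain (size A').+1 -> cochain (size B) := linext (phibasis x0 A' B c).

End CochainComplex.

Arguments member {F V} C i.
Arguments vjoin {F V} W C sigma.
Arguments cdeg {F V} W C sigma.
Arguments dbasis {F V} W C sigma.
Arguments dmap {F V} W C _.
Arguments arrangement {F V} A.
Arguments phibasis {F V} x0 A' B c sigma.
Arguments phimap {F V} x0 A' B c _.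

From HB Require Import structures.
From mathcomp Require Import all_boot all_order all_algebra.
From mathcomp Require Import reals complex.
Import Order.TTheory GRing.Theory Num.Theory.
Local Open Scope ring_scope.
Set Implicit Arguments.
Unset Strict Implicit.

(* If x0 is not in sigma, phi kills sigma and all its faces; if it is, phi
   kills the face dropping x0.  So write sigma = {x0} ∪ S with S ⊆ A'.
   If no two members of S lie in the same class, S ↦ c(S) is injective,
   preserves intersections (x0 ∩ ⋂S = ⋂c(S)) and, by the ordering convention,
   positions; the extra position taken by x0 is compensated by the sign
   (-1)^|S| in phi, so the faces of sigma and of phi(sigma) match one to one.
   If S has a collision, phi(sigma) = 0, and a face of sigma survives phi only
   if it drops one member of a colliding pair j1 < j2 and leaves no other
   collision; these two faces have the same intersection and the same image,
   and their positions differ by one, so they cancel. *)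

Lemma big_csumE m (I : finType) (P : pred I) (F : I -> cochain m) t :
  (\big[csum/czero]_(i | P i) F i) t = \sum_(i | P i) F i t.
Proof.
by apply: (big_morph (fun f : cochain m => f t)) => [f g|]; rewrite ffunE.
Qed.

Section LinearExtension.
Variables (m m' : nat) (g : {set 'I_m} -> cochain m').

Lemma linext0 t : linext g czero t = 0.
Proof. by rewrite ffunE big1 // => s _; rewrite ffunE mul0r. Qed.

Lemma linext_scale_basis q T t : linext g (cscale q (basis_el T)) t = q * g T t.
Proof.
rewrite ffunE (bigD1 T) //= !ffunE eqxx mulr1 big1 ?addr0 // => U /negbTE nUT.
by rewrite !ffunE nUT mulr0 mul0r.
Qed.

Lemma linext_sum_basis (I : finType) (P : pred I) (a : I -> rat)
    (h : I -> {set 'I_m}) t :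
  linext g (\big[csum/czero]_(i | P i) cscale (a i) (basis_el (h i))) t
  = \sum_(i | P i) a i * g (h i) t.
Proof.
rewrite ffunE (eq_bigr (fun s => \sum_(i | P i) a i * (s == h i)%:R * g s t));
  last by move=> s _; rewrite big_csumE big_distrl; apply: eq_bigr => i _; rewrite !ffunE.
rewrite exchange_big; apply: eq_bigr => i _ /=.
rewrite (bigD1 (h i)) //= eqxx mulr1 big1 ?addr0 // => s /negbTE ->.
by rewrite mulr0 mul0r.
Qed.

End LinearExtension.

Lemma linext_comp m1 m2 m3 (g1 : {set 'I_m1} -> cochain m2)
    (g2 : {set 'I_m2} -> cochain m3) f t :
  linext g2 (linext g1 f) t = \sum_s f s * linext g2 (g1 s) t.
Proof.
rewrite /linext ffunE (eq_bigr (fun u => \sum_s f s * g1 s u * g2 u t));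
  last by move=> u _; rewrite ffunE big_distrl.
rewrite exchange_big; apply: eq_bigr => s _; rewrite ffunE big_distrr.
by apply: eq_bigr => u _; rewrite /= mulrA.
Qed.

Lemma dbasisE (F : fieldType) (V : vectType F) (W : {vspace V})
    (C : seq {vspace V}) (s t : {set 'I_(size C)}) :
  dbasis W C s t =
  \sum_(i : 'I_(size C) | (i \in s) && (vjoin W C (s :\ i) == vjoin W C s))
     (-1) ^+ pos s i * (t == s :\ i)%:R.
Proof. by rewrite big_csumE; apply: eq_bigr => i _; rewrite !ffunE. Qed.

Lemma imsetD1 (aT rT : finType) (f : aT -> rT) (S : {set aT}) x :
  {in S &, injective f} -> x \in S -> f @: (S :\ x) = f @: S :\ f x.
Proof.
move=> injf xS; apply/setP => y; rewrite !inE; apply/imsetP/andP.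
  case=> z; rewrite !inE => /andP [zx zS] ->; split; last exact: imset_f.
  by apply: contra zx => /eqP /injf ->.
case=> yx /imsetP [z zS yz]; exists z => //; rewrite !inE zS andbT.
by apply: contraNneq yx => zx; rewrite yz zx.
Qed.

Definition tail_set {m : nat} (s : {set 'I_m.+1}) : {set 'I_m} := lift ord0 @^-1: s.

Lemma tail_setD1 m (s : {set 'I_m.+1}) j :
  tail_set (s :\ lift ord0 j) = tail_set s :\ j.
Proof. by apply/setP => k; rewrite !inE (inj_eq (@lift_inj _ ord0)). Qed.

Lemma pos_sumE m (s : {set 'I_m}) i :
  pos s i = (\sum_(k < m) ((k \in s) && (k <= i)%N))%N.
Proof.
by rewrite /pos -sum1_card big_mkcond; apply: eq_bigr => k _; rewrite inE; case: ifP.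
Qed.

Lemma pos_lift0 m (s : {set 'I_m.+1}) j :
  ord0 \in s -> pos s (lift ord0 j) = (pos (tail_set s) j).+1.
Proof.
move=> s0; rewrite !pos_sumE big_ord_recl s0 leq0n add1n; congr _.+1.
by apply: eq_bigr => k _; rewrite inE !lift0 ltnS.
Qed.

Section ClassMap.
Variables (n k : nat) (c : 'I_n -> 'I_k).

Definition collision (S : {set 'I_n}) : bool :=
  [exists j1, exists j2, [&& j1 != j2, j1 \in S, j2 \in S & c j1 == c j2]].

Lemma collisionN_inj S : ~~ collision S -> {in S &, injective c}.
Proof.
move=> noS j1 j2 j1S j2S cj12; apply/eqP; apply: contraNT noS => j12.
by apply/existsP; exists j1; apply/existsP; exists j2; rewrite j12 j1S j2S cj12 eqxx.
Qed.

Lemma collisionS (S1 S2 : {set 'I_n}) : S1 \subset S2 -> collision S1 -> collision S2.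
Proof.
move=> sS12 /existsP [a /existsP [b /and4P [ab aS bS cab]]].
by apply/existsP; exists a; apply/existsP; exists b; rewrite ab cab !(subsetP sS12).
Qed.

(* Removing either member of a colliding pair {a, b} leaves the same
   collisions, up to renaming b into a. *)
Lemma collisionD1_swap (S : {set 'I_n}) a b :
    a \in S -> b \in S -> a != b -> c a = c b ->
  collision (S :\ b) -> collision (S :\ a).
Proof.
move=> aS bS ab cab /existsP [u /existsP [v /and4P [uv]]].
rewrite !inE => /andP [ub uS] /andP [vb vS] /eqP cuv.
case: (eqVneq u a) => [eq_ua | ua]; first subst u.
  apply/existsP; exists b; apply/existsP; exists v.
  by rewrite !inE bS vS eq_sym vb eq_sym ab eq_sym uv -cab cuv eqxx.
case: (eqVneq v a) => [eq_va | va]; first subst v.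
  apply/existsP; exists u; apply/existsP; exists b.
  by rewrite !inE ub ua uS eq_sym ab bS cuv cab eqxx.
by apply/existsP; exists u; apply/existsP; exists v; rewrite !inE ua uS va vS uv cuv eqxx.
Qed.

Lemma imset_classD1 (S : {set 'I_n}) a b :
  b \in S -> a != b -> c a = c b -> c @: (S :\ a) = c @: S.
Proof.
move=> bS ab cab; apply/setP => y; apply/imsetP/imsetP => [[x] | [x xS ->]].
  by rewrite inE => /andP [_ xS] ->; exists x.
case: (eqVneq x a) => [-> | xa]; first by exists b; rewrite // !inE bS eq_sym ab.
by exists x; rewrite // !inE xa xS.
Qed.

Hypothesis c_sorted : forall j1 j2, (c j1 < c j2)%N -> (j1 < j2)%N.

Lemma pos_class_image S j :
  ~~ collision S -> j \in S -> pos (c @: S) (c j) = pos S j.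
Proof.
move=> noS jS; have injc := collisionN_inj noS.
rewrite /pos -(card_in_imset (f := c)); last first.
  by move=> a b; rewrite !inE => /andP [aS _] /andP [bS _]; apply: injc.
apply: eq_card => y; rewrite !inE; apply/andP/imsetP => [[/imsetP [i iS ->] le] | ].
  exists i; rewrite // inE iS /= leqNgt; apply/negP => lt.
  move: le; rewrite leq_eqVlt => /orP [/eqP /val_inj /injc eq_ij | /c_sorted].
    by move: lt; rewrite eq_ij // ltnn.
  by rewrite ltnNge ltnW.
case=> i; rewrite inE => /andP [iS le] ->; split; first exact: imset_f.
by rewrite leqNgt; apply/negP => /c_sorted; rewrite ltnNge le.
Qed.

(* No member of S lies strictly between j1 and j2: the ordering convention
   makes every class an interval of indices. *)
Lemma pos_class_next (S : {set 'I_n}) (j1 j2 : 'I_n) :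
    (j1 < j2)%N -> j1 \in S -> j2 \in S -> c j1 = c j2 ->
  ~~ collision (S :\ j2) -> pos S j2 = (pos S j1).+1.
Proof.
move=> lt12 j1S j2S c12 noS; rewrite /pos.
suff -> : [set i in S | (i <= j2)%N] = j2 |: [set i in S | (i <= j1)%N].
  by rewrite cardsU1 inE negb_and orbC -ltnNge lt12.
apply/setP => i; rewrite !inE; case: (eqVneq i j2) => [-> | ij2] /=.
  by rewrite j2S leqnn.
case iS: (i \in S) => //=; apply/idP/idP => [le2 | le1]; last first.
  exact: leq_trans le1 (ltnW lt12).
rewrite leqNgt; apply/negP => gt1.
have lt2 : (i < j2)%N by rewrite ltn_neqAle le2 andbT; apply: contra ij2 => /eqP/val_inj ->.
have ci1 : c i = c j1.
  case: (ltngtP (c i) (c j1)) => [/c_sorted | | /val_inj //].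
    by rewrite ltnNge ltnW.
  by rewrite c12 => /c_sorted; rewrite ltnNge ltnW.
apply: (negP noS); apply/existsP; exists i; apply/existsP; exists j1.
rewrite !inE iS j1S ij2 ci1 eqxx !andbT /=.
by rewrite -!val_eqE /= (gtn_eqF gt1) (ltn_eqF lt12).
Qed.

End ClassMap.

Lemma ord0_in_setD1_lift m (s : {set 'I_m.+1}) j :
  ord0 \in s -> ord0 \in s :\ lift ord0 j.
Proof. by move=> s0; rewrite !inE neq_lift s0. Qed.

Section Restriction.
Variables (F : fieldType) (V : vectType F).
Variables (x0 : {vspace V}) (A' B : seq {vspace V}).
Variable c : 'I_(size A') -> 'I_(size B).

Local Notation n := (size A').
Local Notation A := (x0 :: A').

Hypothesis same_class : forall j1 j2,
  (c j1 == c j2) = (x0 :&: member A' j1 == x0 :&: member A' j2)%VS.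
Hypothesis classes_sorted : forall j1 j2, (c j1 < c j2)%N -> (j1 < j2)%N.
Hypothesis member_class : forall j, member B (c j) = (x0 :&: member A' j)%VS.

Lemma vjoin_class_image (S : {set 'I_n}) :
  vjoin x0 B (c @: S) = (x0 :&: \bigcap_(j in S) member A' j)%VS.
Proof.
apply/eqP; rewrite eqEsubv !subv_cap !capvSl /=; apply/andP; split.
  apply/subv_bigcapP => j jS; apply: subv_trans (capvSr _ _) _.
  by apply: (bigcapv_inf (c j)); rewrite ?imset_f // member_class capvSr.
apply/subv_bigcapP => _ /imsetP [j jS ->].
rewrite member_class subv_cap capvSl /=; apply: subv_trans (capvSr _ _) _.
exact: (bigcapv_inf j).
Qed.

Lemma vjoin_cons (s : {set 'I_n.+1}) : ord0 \in s ->
  vjoin fullv A s = (x0 :&: \bigcap_(j in tail_set s) member A' j)%VS.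
Proof.
move=> s0; rewrite /vjoin capfv big_mkcond big_ord_recl /= s0.
congr (_ :&: _)%VS; rewrite [RHS]big_mkcond; apply: eq_bigr => j _.
by rewrite inE.
Qed.

Lemma phibasisE (s : {set 'I_n.+1}) :
  phibasis x0 A' B c s =
  if (ord0 \in s) && ~~ collision c (tail_set s) then
    cscale ((-1) ^+ (#|s| - 1)) (basis_el (c @: tail_set s))
  else czero.
Proof.
rewrite /phibasis.
have -> : [exists j1, exists j2,
             [&& j1 != j2, lift ord0 j1 \in s, lift ord0 j2 \in s &
                 (x0 :&: member A' j1 == x0 :&: member A' j2)%VS]]
          = collision c (tail_set s).
  by apply: eq_existsb => j1; apply: eq_existsb => j2; rewrite !inE same_class.
have -> : [set k | [exists j, (lift ord0 j \in s) && (c j == k)]] = c @: tail_set s.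
  apply/setP => k; rewrite inE; apply/existsP/imsetP => [[j /andP [js /eqP <-]] |].
    by exists j; rewrite ?inE.
  by case=> j; rewrite inE => js ->; exists j; rewrite js eqxx.
by case: (ord0 \in s); case: collision.
Qed.

Lemma phibasis_ord0N (s : {set 'I_n.+1}) : ord0 \notin s -> phibasis x0 A' B c s = czero.
Proof. by move=> /negbTE s0; rewrite phibasisE s0. Qed.

Lemma phibasis_collision (s : {set 'I_n.+1}) :
  collision c (tail_set s) -> phibasis x0 A' B c s = czero.
Proof. by move=> coll; rewrite phibasisE coll andbF. Qed.

Definition phi_face (r : {set 'I_n.+1}) t (j : 'I_n) : rat :=
  if (lift ord0 j \in r) && (vjoin fullv A (r :\ lift ord0 j) == vjoin fullv A r)
  then (-1) ^+ pos r (lift ord0 j) * phibasis x0 A' B c (r :\ lift ord0 j) t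
  else 0.

(* The face of r removing x0 contributes nothing, since phi kills it. *)
Lemma phi_dbasisE (r : {set 'I_n.+1}) t :
  linext (phibasis x0 A' B c) (dbasis fullv A r) t = \sum_j phi_face r t j.
Proof.
rewrite linext_sum_basis big_mkcond big_ord_recl /= phibasis_ord0N ?inE ?eqxx //.
by rewrite ffunE mulr0 if_same add0r.
Qed.

Lemma phi_face_redundant (r : {set 'I_n.+1}) t a :
    ord0 \in r -> a \in tail_set r -> ~~ collision c (tail_set r :\ a) ->
    c @: (tail_set r :\ a) = c @: tail_set r ->
  phi_face r t a =
  (-1) ^+ (pos (tail_set r) a).+1 * ((-1) ^+ (#|r| - 2) * basis_el (c @: tail_set r) t).
Proof.
move=> r0 aS noSa ima; have ar : lift ord0 a \in r by rewrite inE in aS.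
rewrite /phi_face ar !vjoin_cons ?ord0_in_setD1_lift // tail_setD1.
rewrite -!vjoin_class_image ima eqxx phibasisE ord0_in_setD1_lift // tail_setD1.
rewrite noSa ima !ffunE pos_lift0 // (cardsD1 (lift ord0 a) r) ar add1n.
by rewrite subSS.
Qed.

(* The faces dropping j1 or j2 are the only survivors; by the ordering
   convention j1 and j2 are adjacent in r, so they cancel. *)
Lemma phi_face_collision (r : {set 'I_n.+1}) t (j1 j2 : 'I_n) :
    ord0 \in r -> (j1 < j2)%N -> j1 \in tail_set r -> j2 \in tail_set r ->
  c j1 = c j2 -> \sum_j phi_face r t j = 0.
Proof.
move=> r0 lt12 j1S j2S c12.
have j12 : j1 != j2 by rewrite -val_eqE /= ltn_eqF.
rewrite (bigD1 j1) // (bigD1 j2) 1?eq_sym //= big1 ?addr0 => [|j /andP [j1j j2j]].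
  have [coll1 | noS1] := boolP (collision c (tail_set r :\ j1)).
    have coll2 : collision c (tail_set r :\ j2).
      by apply: (collisionD1_swap j2S j1S _ (esym c12)); rewrite // eq_sym.
    by rewrite /phi_face !phibasis_collision ?tail_setD1 // !ffunE !mulr0 !if_same addr0.
  have noS2 : ~~ collision c (tail_set r :\ j2).
    by apply: contra noS1; apply: collisionD1_swap.
  rewrite !phi_face_redundant ?(imset_classD1 j2S j12 c12) //; last first.
    by rewrite (imset_classD1 j1S _ (esym c12)) // eq_sym.
  rewrite (pos_class_next classes_sorted lt12 j1S j2S c12 noS2).
  by rewrite (exprS _ (pos _ j1).+1) mulN1r mulNr addrN.
rewrite /phi_face phibasis_collision ?ffunE ?mulr0 ?if_same // tail_setD1.
apply/existsP; exists j1; apply/existsP; exists j2.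
by rewrite !in_setD1 j12 j1S j2S c12 eqxx (eq_sym j1) (eq_sym j2) j1j j2j.
Qed.

Lemma phi_face_injective (r : {set 'I_n.+1}) t :
    ord0 \in r -> ~~ collision c (tail_set r) ->
  \sum_j phi_face r t j = linext (dbasis x0 B) (phibasis x0 A' B c r) t.
Proof.
move=> r0 noS; rewrite phibasisE r0 noS /= linext_scale_basis dbasisE big_mkcondr.
set S := tail_set r in noS *; have injc := collisionN_inj noS.
rewrite (big_imset _ injc) /= mulr_sumr [RHS]big_mkcond; apply: eq_bigr => j _.
rewrite /phi_face; have -> : (lift ord0 j \in r) = (j \in S) by rewrite inE.
have [jS | //] := boolP (j \in S); have ljr : lift ord0 j \in r by rewrite inE in jS.
rewrite -imsetD1 // !vjoin_class_image !vjoin_cons ?ord0_in_setD1_lift // tail_setD1 /=.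
case: ifP => _; last by rewrite mulr0.
have noSj : ~~ collision c (S :\ j) by apply: contra noS; apply/collisionS/subsetDl.
rewrite phibasisE tail_setD1 ord0_in_setD1_lift // noSj /= !ffunE.
rewrite pos_lift0 // pos_class_image // imsetD1 // !mulrA -!exprD.
have card_r : #|r| = #|r :\ lift ord0 j|.+1 by rewrite (cardsD1 (lift ord0 j) r) ljr.
have card_pos : (0 < #|r :\ lift ord0 j|)%N.
  by apply/card_gt0P; exists ord0; apply: ord0_in_setD1_lift.
by congr (_ ^+ _ * _); rewrite /S card_r !subn1 /= addSn -addnS prednK // addnC.
Qed.

Lemma phi_dbasis (r : {set 'I_n.+1}) t :
  linext (phibasis x0 A' B c) (dbasis fullv A r) t
  = linext (dbasis x0 B) (phibasis x0 A' B c r) t.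
Proof.
rewrite phi_dbasisE; have [r0 | r0] := boolP (ord0 \in r); last first.
  rewrite phibasis_ord0N // linext0; apply: big1 => j _.
  by rewrite /phi_face phibasis_ord0N ?ffunE ?mulr0 ?if_same // !inE (negbTE r0) andbF.
have [coll | ] := boolP (collision c (tail_set r)); last exact: phi_face_injective.
rewrite phibasis_collision // linext0.
case/existsP: coll => j1 /existsP [j2 /and4P [j12 j1S j2S /eqP c12]].
case: (ltngtP j1 j2) => [lt12 | lt21 | /val_inj eq12]; last by rewrite eq12 eqxx in j12.
  exact: phi_face_collision lt12 j1S j2S c12.
exact: phi_face_collision lt21 j2S j1S (esym c12).
Qed.

End Restriction.

Unset Implicit Arguments.

Theorem lemma3p1 (R : realType) (l : nat)
  (x0 : {vspace 'rV[R[i]]_l}) (A' B : seq {vspace 'rV[R[i]]_l})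
  (c : 'I_(size A') -> 'I_(size B)) :
  arrangement (x0 :: A') ->
  (forall k : 'I_(size B), exists j, c j = k) ->
  (forall j1 j2 : 'I_(size A'),
      (c j1 == c j2) = (x0 :&: member A' j1 == x0 :&: member A' j2)%VS) ->
  (forall j1 j2 : 'I_(size A'), (c j1 < c j2)%N -> (j1 < j2)%N) ->
  (forall j : 'I_(size A'), member B (c j) = (x0 :&: member A' j)%VS) ->
  forall f : cochain (size (x0 :: A')),
    phimap x0 A' B c (dmap fullv (x0 :: A') f) = dmap x0 B (phimap x0 A' B c f).
Proof.
move=> _ _ same_class classes_sorted member_class f; apply/ffunP => t.
rewrite /phimap /dmap !linext_comp; apply: eq_bigr => r _.
by rewrite phi_dbasis.
Qed.
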